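(* For $k\ge4$, $\Phi_k(d_{\mathrm{lbd}}(k),x)>0$ for all $x\in[\frac12-\frac1{2^k},\frac12]$.
   Context: $\Phi_k(d,x)=-\log(1-x)-d(1-k^{-1}-d^{-1})\log(1-2x^k)+(d-1)\log(1-x^{k-1})$; $d_{\mathrm{lbd}}(4)=16.7$, $d_{\mathrm{lbd}}(k)=(2^{k-1}-2)k\log2$ for $k\ge5$. *)

From Stdlib Require Import Reals.
Open Scope R_scope.

Definition Phi (k : nat) (d x : R) : R :=
  - ln (1 - x)
  - d * (1 - / INR k - / d) * ln (1 - 2 * x ^ k)
  + (d - 1) * ln (1 - x ^ (k - 1)).

Definition d_lbd (k : nat) : R :=
  if (k <=? 4)%nat then 167 / 10
  else (2 ^ (k - 1) - 2) * INR k * ln 2.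

From Stdlib Require Import Reals Lra Lia Psatz.
From Coquelicot Require Import Coquelicot.
Open Scope R_scope.

(* Write k = m + 1, N = 2^m, K = d/k, b = x^m and u = 2x, so that 2x^k = u b and
   Phi k d x = -ln(1-x) + K ln(1-b) + (K m - 1) (ln(1-b) - ln(1-u b)).
   On the interval, -ln(1-x) >= ln 2 - ln(1+1/N), and Bernoulli's inequality gives
   b (1 + m (1-u)) <= 1/N.  With ln p - ln q <= p/q - 1, the latter says that the loss
   in the last term is paid for by the gain K (ln(1-b) - ln(1-1/N)), whence
   Phi k d x >= ln 2 - ln(1+1/N) + K ln(1-1/N).  For d = d_lbd k this bound is positive,
   by fourth-order Taylor bounds for ln(1-v). *)

Lemma ln_le_sub1 (z : R) : 0 < z -> ln z <= z - 1.
Proof.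
  intros Hz. pose proof (exp_ineq1_le (ln z)) as H.
  rewrite exp_ln in H; lra.
Qed.

Lemma ln_sub_ln_le (p q : R) : 0 < p -> 0 < q -> ln p - ln q <= p / q - 1.
Proof.
  intros Hp Hq. rewrite <- ln_div by lra.
  apply ln_le_sub1, Rdiv_lt_0_compat; lra.
Qed.

Lemma pow_1m_mul_1p_le1 (n : nat) (h : R) :
  0 <= h <= 1 -> (1 - h) ^ n * (1 + INR n * h) <= 1.
Proof.
  intros Hh. induction n as [|n IH]; [simpl; lra |].
  rewrite S_INR; simpl.
  assert (0 <= (1 - h) ^ n) by (apply pow_le; lra).
  assert ((1 - h) * (1 + (INR n + 1) * h) <= 1 + INR n * h)
    by (pose proof (pos_INR n); nra).
  nra.
Qed.

Lemma ln_1m_combination_ge (K m u b c : R) :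
  0 <= K -> 0 <= m -> 0 <= u <= 1 -> 0 <= b -> b * (1 + m * (1 - u)) <= c -> c < 1 ->
  K * ln (1 - c) <= K * ln (1 - b) + (K * m - 1) * (ln (1 - b) - ln (1 - u * b)).
Proof.
  intros HK Hm Hu Hb Hbc Hc.
  assert (0 <= m * (1 - u)) by nra.
  assert (b <= c) by nra.
  assert (u * b <= b) by nra.
  set (w := / (1 - b)).
  assert (Hw : 0 < w) by (apply Rinv_0_lt_compat; lra).
  assert (Hgain : ln (1 - c) - ln (1 - b) <= (b - c) * w).
  { replace ((b - c) * w) with ((1 - c) / (1 - b) - 1) by (unfold w; field; lra).
    apply ln_sub_ln_le; lra. }
  assert (Hloss : ln (1 - u * b) - ln (1 - b) <= (1 - u) * b * w).
  { replace ((1 - u) * b * w) with ((1 - u * b) / (1 - b) - 1) by (unfold w; field; lra).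
    apply ln_sub_ln_le; nra. }
  assert (Hmono : ln (1 - b) <= ln (1 - u * b)) by (apply ln_le; lra).
  assert (Hbern : m * ((1 - u) * b) <= c - b) by nra.
  apply (Rmult_le_compat_l K) in Hgain, Hbern; try lra.
  apply (Rmult_le_compat_l (K * m)) in Hloss; [| nra].
  nra.
Qed.

Lemma Phi_lower_bound (k : nat) (d x : R) :
  (2 <= k)%nat -> 0 < d -> 1 / 2 - 1 / 2 ^ k <= x <= 1 / 2 ->
  ln 2 - ln (1 + 1 / 2 ^ (k - 1)) + d / INR k * ln (1 - 1 / 2 ^ (k - 1)) <= Phi k d x.
Proof.
  intros Hk Hd Hx.
  destruct k as [|m]; [lia |]. replace (S m - 1)%nat with m by lia.
  set (N := 2 ^ m). set (K := d / INR (S m)).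
  assert (HN : 2 <= N) by (unfold N; rewrite <- (pow_1 2) at 1; apply Rle_pow; [lra | lia]).
  assert (H1N : 0 < 1 / N <= 1 / 2).
  { split; [apply Rdiv_lt_0_compat; lra |].
    apply Rmult_le_compat_l, Rinv_le_contravar; lra. }
  assert (Hx' : 1 - 1 / N <= 2 * x <= 1).
  { replace (2 ^ S m) with (2 * N) in Hx by reflexivity.
    replace (1 - 1 / N) with (2 * (1 / 2 - 1 / (2 * N))) by (field; lra). lra. }
  assert (HK : 0 <= K) by (apply Rdiv_le_0_compat; [lra | apply lt_0_INR; lia]).
  assert (HPhi : Phi (S m) d x = - ln (1 - x) + K * ln (1 - x ^ m)
                   + (K * INR m - 1) * (ln (1 - x ^ m) - ln (1 - 2 * x * x ^ m))).
  { unfold Phi, K. replace (S m - 1)%nat with m by lia.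
    replace (2 * x ^ S m) with (2 * x * x ^ m) by (simpl; ring).
    rewrite S_INR. pose proof (pos_INR m). field. split; lra. }
  assert (Hlnx : ln 2 - ln (1 + 1 / N) <= - ln (1 - x)).
  { assert (Hle : ln (1 - x) <= ln ((1 + 1 / N) / 2)) by (apply ln_le; lra).
    rewrite ln_div in Hle; lra. }
  assert (Hb : x ^ m * (1 + INR m * (1 - 2 * x)) <= 1 / N).
  { pose proof (pow_1m_mul_1p_le1 m (1 - 2 * x) ltac:(lra)) as Hbern.
    replace (1 - (1 - 2 * x)) with (2 * x) in Hbern by ring.
    rewrite Rpow_mult_distr in Hbern.
    apply (Rmult_le_reg_l N); [lra |].
    replace (N * (1 / N)) with 1 by (field; lra).
    unfold N. lra. }
  pose proof (ln_1m_combination_ge K (INR m) (2 * x) (x ^ m) (1 / N) HK (pos_INR m)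
                ltac:(lra) ltac:(apply pow_le; lra) Hb ltac:(lra)).
  lra.
Qed.

Lemma le_of_is_derive_nonneg (f df : R -> R) (a b : R) : a <= b ->
  (forall c, a <= c <= b -> is_derive f c (df c)) ->
  (forall c, a < c < b -> 0 <= df c) -> f a <= f b.
Proof.
  intros Hab Hder Hpos.
  destruct (Req_dec a b) as [-> | Hne]; [lra |].
  destruct (MVT_cor2 f df a b) as [c [Hmvt Hc]]; [lra | |].
  - intros c Hc. apply is_derive_Reals, Hder, Hc.
  - assert (0 <= df c) by (apply Hpos, Hc). nra.
Qed.

Lemma ln_1m_le_taylor (v : R) : 0 <= v < 1 ->
  ln (1 - v) <= - v - v ^ 2 / 2 - v ^ 3 / 3 - v ^ 4 / 4.
Proof.
  intros Hv.
  set (f := fun z => - z - z ^ 2 / 2 - z ^ 3 / 3 - z ^ 4 / 4 - ln (1 - z)).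
  assert (H : f 0 <= f v).
  { apply (le_of_is_derive_nonneg f (fun z => z ^ 4 / (1 - z))); [lra | |].
    - intros c Hc. unfold f. auto_derive; [lra |]. field. lra.
    - intros c Hc. apply Rdiv_le_0_compat; [nra | lra]. }
  unfold f in H. rewrite Rminus_0_r, ln_1 in H. lra.
Qed.

Lemma ln_1m_ge_taylor (v : R) : 0 <= v < 1 ->
  - v - v ^ 2 / 2 - v ^ 3 / 3 - v ^ 4 / (4 * (1 - v)) <= ln (1 - v).
Proof.
  intros Hv.
  set (f := fun z => ln (1 - z) + z + z ^ 2 / 2 + z ^ 3 / 3 + z ^ 4 / (4 * (1 - z))).
  assert (H : f 0 <= f v).
  { apply (le_of_is_derive_nonneg f (fun z => z ^ 4 / (4 * (1 - z) ^ 2))); [lra | |].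
    - intros c Hc. unfold f. auto_derive; [lra |]. field. lra.
    - intros c Hc. apply Rdiv_le_0_compat; nra. }
  unfold f in H. rewrite Rminus_0_r, ln_1 in H. lra.
Qed.

Lemma ln2_ge : 131 / 192 <= ln 2.
Proof.
  pose proof (ln_1m_le_taylor (1 / 2) ltac:(lra)) as H.
  replace (1 - 1 / 2) with (/ 2) in H by field.
  rewrite ln_Rinv in H; lra.
Qed.

Lemma Phi_lower_bound_pos_4 : 0 < ln 2 - ln (1 + 1 / 8) + 167 / 10 / 4 * ln (1 - 1 / 8).
Proof.
  pose proof ln2_ge.
  pose proof (ln_1m_ge_taylor (1 / 8) ltac:(lra)).
  pose proof (ln_1m_ge_taylor (1 / 9) ltac:(lra)) as H9.
  replace (1 + 1 / 8) with (/ (1 - 1 / 9)) by field.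
  rewrite ln_Rinv by lra. lra.
Qed.

Lemma Phi_lower_bound_pos_large (N : R) : 16 <= N ->
  0 < ln 2 - ln (1 + 1 / N) + (N - 2) * ln 2 * ln (1 - 1 / N).
Proof.
  intros HN. set (v := 1 / N).
  assert (Hv : 0 < v <= 1 / 16).
  { split; [apply Rdiv_lt_0_compat; lra |].
    apply Rmult_le_compat_l, Rinv_le_contravar; lra. }
  assert (HNv : N * v = 1) by (unfold v; field; lra).
  pose proof ln2_ge.
  assert (Hup : ln (1 + v) <= v) by (pose proof (ln_le_sub1 (1 + v)); lra).
  pose proof (ln_1m_ge_taylor v ltac:(lra)) as Hlo.
  set (T := v ^ 4 / (4 * (1 - v))) in Hlo.
  assert (HT : 0 <= T <= v ^ 4 * (4 / 15)).
  { unfold T. split; [apply Rdiv_le_0_compat; nra |].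
    replace (4 / 15) with (/ (15 / 4)) by field.
    apply Rmult_le_compat_l; [nra |]. apply Rinv_le_contravar; lra. }
  (* As (3/2) ln 2 > 1, it suffices that 1 + (N - 2) ln (1 - v) >= 3 v / 2. *)
  set (S := v + v ^ 2 / 2 + v ^ 3 / 3 + T).
  assert (HS : (N - 2) * S <= 1 - 3 / 2 * v).
  { apply (Rmult_le_reg_l v); [lra |].
    replace (v * ((N - 2) * S)) with ((N * v) * S - 2 * v * S) by ring.
    rewrite HNv. unfold S. nra. }
  assert (Hmain : 3 / 2 * v <= 1 + (N - 2) * ln (1 - v)).
  { assert ((N - 2) * - S <= (N - 2) * ln (1 - v))
      by (apply Rmult_le_compat_l; unfold S; lra).
    lra. }
  nra.
Qed.

Theorem lemma3p5 (k : nat) (x : R) :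
  (4 <= k)%nat ->
  1 / 2 - 1 / 2 ^ k <= x <= 1 / 2 ->
  Phi k (d_lbd k) x > 0.
Proof.
  intros Hk Hx.
  destruct (Nat.eq_dec k 4) as [-> | Hk5].
  - assert (Hge := Phi_lower_bound 4 (167 / 10) x ltac:(lia) ltac:(lra) Hx).
    replace (2 ^ (4 - 1)) with 8 in Hge by (simpl; ring).
    replace (INR 4) with 4 in Hge by (simpl; ring).
    pose proof Phi_lower_bound_pos_4. unfold d_lbd; simpl. lra.
  - set (N := 2 ^ (k - 1)).
    assert (HN : 16 <= N).
    { replace 16 with (2 ^ 4) by ring. apply Rle_pow; [lra | lia]. }
    assert (Hd : d_lbd k = (N - 2) * INR k * ln 2).
    { unfold d_lbd. replace (k <=? 4)%nat with false by (symmetry; apply Nat.leb_gt; lia).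
      reflexivity. }
    assert (Hkpos : 0 < INR k) by (apply lt_0_INR; lia).
    pose proof ln2_ge.
    assert (Hge := Phi_lower_bound k (d_lbd k) x ltac:(lia)
                    ltac:(rewrite Hd; apply Rmult_lt_0_compat; nra) Hx).
    replace (d_lbd k / INR k) with ((N - 2) * ln 2) in Hge by (rewrite Hd; field; lra).
    fold N in Hge. pose proof (Phi_lower_bound_pos_large N HN). lra.
Qed.
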